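(* Let $n\geq 4$ be even and let $\mathrm{D}_{2n}=\langle a,b\mid a^n=b^2=1,\ b^{-1}ab=a^{-1}\rangle$. Let $H\subseteq\langle a^2\rangle$ and $K\subseteq a\langle a^2\rangle$ satisfy $H^{-1}=H$ and $K^{-1}=K$. Put $S=bH\cup K$ and $T=bH\cup bK$. Then $\mathrm{Cay}(\mathrm{D}_{2n},S)\cong\mathrm{Cay}(\mathrm{D}_{2n},T)$. In particular, if $\mathrm{D}_{2n}$ has the $|S|$-DCI property, then $K=\emptyset$.
   Context: For a group $G$ and a subset $S\subseteq G$ with $1\notin S$, the Cayley digraph $\mathrm{Cay}(G,S)$ has vertex set $G$ and arc set $\{(g,sg)\mid g\in G,\ s\in S\}$. $\mathrm{Cay}(G,S)$ is a CI-digraph if for every $T\subseteq G$ with $1\notin T$ and $\mathrm{Cay}(G,T)\cong\mathrm{Cay}(G,S)$ there is $\alpha\in\mathrm{Aut}(G)$ with $S^\alpha=T$. For a positive integer $m$, $G$ has the $m$-DCI property if every Cayley digraph $\mathrm{Cay}(G,S)$ with $|S|=m$ is a CI-digraph. $H^{-1}=\{h^{-1}\mid h\in H\}$. *)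

From mathcomp Require Import all_boot all_fingroup.
Set Implicit Arguments. Unset Strict Implicit. Unset Printing Implicit Defensive.
Local Open Scope group_scope.

Definition cay_arc (gT : finGroupType) (S : {set gT}) (x y : gT) : bool :=
  y * x^-1 \in S.

Definition cay_iso (gT : finGroupType) (G : {set gT}) (S T : {set gT}) : Prop :=
  exists f : gT -> gT,
    [/\ {in G &, injective f}, f @: G = G &
        {in G &, forall x y, cay_arc S x y = cay_arc T (f x) (f y)}].

Definition CI_digraph (gT : finGroupType) (G : {group gT}) (S : {set gT}) : Prop :=
  forall T : {set gT}, T \subset G -> 1 \notin T -> cay_iso G S T ->
    exists2 alpha : {perm gT}, alpha \in Aut G & alpha @: S = T.

Definition DCI_property (gT : finGroupType) (G : {group gT}) (m : nat) : Prop :=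
  forall S : {set gT}, S \subset G -> 1 \notin S -> #|S| = m -> CI_digraph G S.

Definition dihedral_pres (gT : finGroupType) (G : {group gT}) (n : nat) (a b : gT) : Prop :=
  [/\ G = <<[set a; b]>> :> {set gT}, a ^+ n = 1, b ^+ 2 = 1,
      b^-1 * a * b = a^-1 & #|G| = n.*2].

From mathcomp Require Import all_boot all_fingroup.
From mathcomp Require Import cyclic zify.
Set Implicit Arguments.
Unset Strict Implicit.
Unset Printing Implicit Defensive.

Local Open Scope group_scope.

(* As n is even, L = <a^2, b> is a subgroup of index 2 of D_2n;
   it contains bH and is disjoint from K.  The bijection fixing L pointwise and
   multiplying G \ L on the left by b is an isomorphism Cay(D_2n, S) ~= Cay(D_2n, T):
   an arc between two points off L has label in L and is conjugated by b, which
   fixes bH because H^-1 = H and b inverts <a>; an arc between L and G \ L has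
   label off L, where S and T reduce to K and bK, and K^b = K^-1 = K.
   For the second claim, every element of D_2n outside <a> is an involution, so
   for n > 2 each automorphism maps <a> into itself; but S meets <a> in K while
   T avoids <a>, hence an automorphism mapping S onto T forces K to be empty. *)

Section IndexTwo.
Variables (gT : finGroupType) (G L : {group gT}).
Hypothesis sLG : L \subset G.

Lemma index2_of_cover c :
  c \in G :\: L -> G \subset L :|: L :* c -> #|G : L| = 2.
Proof.
case/setDP=> cG cL cover.
have iLG_gt1 : (1 < #|G : L|)%N by rewrite indexg_gt1; apply: contra cL => /subsetP; apply.
have cardG_le : (#|G| <= #|L| + #|L|)%N.
  by apply: leq_trans (subset_leq_card cover) _; rewrite cardsU card_rcoset leq_subr.
have := Lagrange sLG; have := cardG_gt0 L; nia.
Qed.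

Hypothesis iLG : #|G : L| = 2.

Lemma rcoset_index2 x : x \in G :\: L -> L :* x = G :\: L.
Proof.
case/setDP=> xG xL; apply/eqP; rewrite eqEcard; apply/andP; split.
  apply/subsetP=> _ /rcosetP[l lL ->].
  by rewrite inE groupMl // xL groupM // (subsetP sLG).
by rewrite card_rcoset cardsD (setIidPr sLG) -(Lagrange sLG) iLG mulnS muln1 addnK.
Qed.

Lemma mulgV_index2 x y : x \in G :\: L -> y \in G :\: L -> y * x^-1 \in L.
Proof. by move=> xGL yGL; rewrite -mem_rcoset rcoset_index2. Qed.

End IndexTwo.

Section Switching.
Variables (gT : finGroupType) (G L : {group gT}) (b : gT) (S T : {set gT}).
Hypotheses (sLG : L \subset G) (iLG : #|G : L| = 2) (bL : b \in L).
(* One condition for each position of the endpoints of an arc relative to L: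
   both in L, both off L, tail in L, head in L. *)
Hypothesis eqST_in : {in L, forall z, (z \in T) = (z \in S)}.
Hypothesis conjST_in : {in L, forall z, (z ^ b^-1 \in T) = (z \in S)}.
Hypothesis lmulST_out : {in G :\: L, forall z, (b * z \in T) = (z \in S)}.
Hypothesis rmulST_out : {in G :\: L, forall z, (z * b^-1 \in T) = (z \in S)}.

Definition switch x := if x \in L then x else b * x.

Lemma switch_in_inj : {in G &, injective switch}.
Proof.
move=> x y _ _; rewrite /switch.
case: ifPn => xL; case: ifPn => yL xy //; last exact: mulgI xy.
- by rewrite xy groupMl // (negPf yL) in xL.
- by rewrite -xy groupMl // (negPf xL) in yL.
Qed.

Lemma switch_imset : switch @: G = G.
Proof.
apply/eqP; rewrite eqEcard (card_in_imset switch_in_inj) leqnn andbT.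
apply/subsetP=> _ /imsetP[x xG ->]; rewrite /switch.
by case: ifP => // _; rewrite groupM // (subsetP sLG).
Qed.

Lemma switch_arc :
  {in G &, forall x y, cay_arc S x y = cay_arc T (switch x) (switch y)}.
Proof.
move=> x y xG yG; rewrite /cay_arc /switch.
have zG : y * x^-1 \in G by rewrite groupM ?groupV.
case: (boolP (x \in L)) => xL; case: (boolP (y \in L)) => yL.
- by rewrite eqST_in // groupM ?groupV.
- have zGL : y * x^-1 \in G :\: L by rewrite inE zG groupMr ?groupV // yL.
  by rewrite -mulgA lmulST_out.
- have zGL : y * x^-1 \in G :\: L.
    rewrite inE zG andbT; apply: contra xL => zL.
    by rewrite -groupV -(mulKg y x^-1) groupM ?groupV.
  by rewrite invMg mulgA rmulST_out.
- have zL : y * x^-1 \in L by apply: (mulgV_index2 sLG iLG); rewrite inE ?xL ?yL.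
  have -> : b * y * (b * x)^-1 = (y * x^-1) ^ b^-1 by rewrite conjgE invgK invMg !mulgA.
  by rewrite conjST_in.
Qed.

Lemma switch_cay_iso : cay_iso G S T.
Proof.
by exists switch; split; [exact: switch_in_inj | exact: switch_imset | exact: switch_arc]. 
Qed.

End Switching.

Section Dihedral.
Variables (gT : finGroupType) (G : {group gT}) (n : nat) (a b : gT).
Hypothesis DG : dihedral_pres G n a b.

Lemma dihedral_mema : a \in G.
Proof. by case: DG => -> *; apply: mem_gen; rewrite !inE eqxx. Qed.

Lemma dihedral_memb : b \in G.
Proof. by case: DG => -> *; apply: mem_gen; rewrite !inE eqxx orbT. Qed.

Lemma dihedral_invb : b^-1 = b.
Proof. by case: DG => _ _ b2 _ _; rewrite -[b^-1]mulg1 -b2 expgS expg1 mulKg. Qed.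

Lemma dihedral_conj_cycle z : z \in <[a]> -> z ^ b = z^-1.
Proof.
case: DG => _ _ _ bab _ /cycleP[j ->].
by rewrite conjXg conjgE mulgA bab expVgn.
Qed.

Lemma dihedral_norm_cycle c : c \in <[a]> -> b \in 'N(<[c]>).
Proof. by move=> ca; apply/normP; rewrite -cycleJ dihedral_conj_cycle // cycleV. Qed.

Lemma dihedral_expb k : b ^+ k = b ^+ odd k.
Proof.
case: DG => _ _ b2 _ _.
by rewrite -{1}(odd_double_half k) expgD -muln2 mulnC expgM b2 expg1n mulg1.
Qed.

Lemma dihedral_cover : G \subset <[a]> :|: <[a]> :* b.
Proof.
have sG_ab : G \subset <[a]> * <[b]>.
  rewrite -norm_joinEr ?cycle_subG ?dihedral_norm_cycle ?cycle_id //.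
  case: DG => -> _ _ _ _; rewrite gen_subG; apply/subsetP=> x.
  rewrite !inE => /orP[]/eqP->; rewrite mem_gen // inE cycle_id ?orbT //.
apply/subsetP=> x /(subsetP sG_ab) /mulsgP[c _ ca /cycleP[k ->] ->].
by rewrite dihedral_expb; case: (odd k); rewrite inE ?mem_rcoset ?mulgK ?mulg1 ca ?orbT.
Qed.

Lemma dihedral_order : #[a] = n.
Proof.
case: DG => _ an _ _ cardG.
have n_gt0 : (0 < n)%N by rewrite -double_gt0 -cardG cardG_gt0.
have a_le : (#[a] <= n)%N by rewrite dvdn_leq // order_dvdn an.
have : (#|G| <= #[a] + #[a])%N.
  apply: leq_trans (subset_leq_card dihedral_cover) _.
  by rewrite cardsU card_rcoset leq_subr.
by rewrite cardG -addnn; lia.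
Qed.

Lemma dihedral_b_notin : b \notin <[a]>.
Proof.
apply/negP=> ba; have := order_gt0 a.
have : (#|G| <= #[a])%N.
  by move: dihedral_cover; rewrite (rcoset_id ba) setUid => /subset_leq_card.
by case: DG => _ _ _ _ ->; rewrite dihedral_order -addnn; lia.
Qed.

Lemma dihedral_expg2_out x : x \in G -> x \notin <[a]> -> x ^+ 2 = 1.
Proof.
move/(subsetP dihedral_cover); rewrite inE => /orP[-> //|]; rewrite mem_rcoset => ca _.
rewrite -(mulgKV b x) expgS expg1.
have -> : x * b^-1 * b * (x * b^-1 * b) = x * b^-1 * (x * b^-1) ^ b.
  by rewrite conjgE dihedral_invb !mulgA.
by rewrite dihedral_conj_cycle // mulgV.
Qed.

Lemma dihedral_conjs_cycle (X : {set gT}) : X \subset <[a]> -> X^-1 = X -> X :^ b = X.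
Proof.
move=> sXa XV; apply/setP=> z; rewrite mem_conjg dihedral_invb.
have [za | zNa] := boolP (z \in <[a]>).
  by rewrite dihedral_conj_cycle // -{1}XV mem_invg invgK.
rewrite !(contraNF (subsetP sXa _)) // memJ_norm //.
exact/dihedral_norm_cycle/cycle_id.
Qed.

Lemma dihedral_lcoset_notin (X : {set gT}) z :
  X \subset <[a]> -> z \in <[a]> -> z \notin b *: X.
Proof.
move=> sXa za; rewrite mem_lcoset; apply: contra dihedral_b_notin => /(subsetP sXa) bz.
by rewrite -groupV -(mulgK z b^-1) groupM ?groupV.
Qed.

Lemma dihedral_Aut_cycle alpha :
  (2 < n)%N -> alpha \in Aut G -> {in <[a]>, forall z, alpha z \in <[a]>}.
Proof.
move=> n_gt2 AutGalpha; have aG := dihedral_mema.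
have alpha_a : alpha a \in <[a]>.
  apply: contraT => /(dihedral_expg2_out (Aut_closed AutGalpha aG)) /eqP.
  rewrite -order_dvdn -(autmE AutGalpha) (order_injm (injm_autm AutGalpha) aG) dihedral_order.
  by move/dvdn_leq => /(_ isT); rewrite leqNgt n_gt2.
move=> _ /cycleP[k ->]; rewrite -(autmE AutGalpha) morphX //= autmE.
exact: groupX.
Qed.

Definition dihedral_half := (<[a ^+ 2]> <*> <[b]>)%G.
Local Notation L := dihedral_half.

Lemma half_memb : b \in L.
Proof. exact/(subsetP (joing_subr _ _))/cycle_id. Qed.

Lemma half_sub_cycle2 : <[a ^+ 2]> \subset L.
Proof. exact: joing_subl. Qed.

Lemma half_subG : L \subset G.
Proof. by rewrite join_subG !cycle_subG groupX ?dihedral_mema ?dihedral_memb. Qed.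

Hypothesis n_even : ~~ odd n.

Lemma half_notin_a : a \notin L.
Proof.
rewrite /= norm_joinEr ?cycle_subG ?dihedral_norm_cycle ?mem_cycle //.
apply/mulsgP=> -[_ _ /cycleP[j ->] /cycleP[k ->]]; rewrite dihedral_expb.
case: (odd k); rewrite /= ?expg1 ?expg0 ?mulg1 => aE.
  case/negP: dihedral_b_notin; rewrite -(mulKg ((a ^+ 2) ^+ j) b) -aE.
  by rewrite groupM ?groupV ?groupX ?mem_cycle ?cycle_id.
move/eqP: aE; rewrite -expgM -{1}(expg1 a) eq_expg_mod_order dihedral_order.
move/eqP/(congr1 odd).
by rewrite !odd_mod ?(negbTE n_even) // oddM.
Qed.

Lemma half_cover : G \subset L :|: L :* a.
Proof.
have sLaL : forall c, c \in L :|: L :* a -> b * c \in L :|: L :* a.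
  by move=> c; rewrite !inE !mem_rcoset -mulgA !(groupMl _ half_memb).
have cycle_cover : <[a]> \subset L :|: L :* a.
  apply/subsetP=> _ /cycleP[k ->].
  rewrite -(odd_double_half k) addnC expgD -muln2 mulnC expgM inE mem_rcoset.
  have a2L : (a ^+ 2) ^+ k./2 \in L by rewrite (subsetP half_sub_cycle2) ?mem_cycle.
  by case: (odd k); rewrite ?expg1 ?mulgK ?mulg1 a2L ?orbT.
apply: subset_trans dihedral_cover _; rewrite subUset cycle_cover /=.
apply/subsetP=> _ /rcosetP[c ca ->]; rewrite conjgC; apply: sLaL.
by rewrite (subsetP cycle_cover) // memJ_norm // dihedral_norm_cycle ?cycle_id.
Qed.

Lemma half_index : #|G : L| = 2.
Proof.
have aGL : a \in G :\: L by rewrite inE half_notin_a dihedral_mema.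
exact: (index2_of_cover half_subG aGL half_cover).
Qed.

Variables H K : {set gT}.
Hypotheses (sH_a2 : H \subset <[a ^+ 2]>) (sK_a2 : K \subset a *: <[a ^+ 2]>).
Hypotheses (HV : H^-1 = H) (KV : K^-1 = K).

Local Notation S := (b *: H :|: K).
Local Notation T := (b *: H :|: b *: K).

Lemma sH_a : H \subset <[a]>.
Proof. by rewrite (subset_trans sH_a2) // cycle_subG mem_cycle. Qed.

Lemma sK_a : K \subset <[a]>.
Proof.
by rewrite (subset_trans sK_a2) // -(lcoset_id (cycle_id a)) lcosetS cycle_subG mem_cycle.
Qed.

Lemma half_lcoset_sub : b *: H \subset L.
Proof.
rewrite -(lcoset_id half_memb) lcosetS.
exact: subset_trans sH_a2 half_sub_cycle2.
Qed.

Lemma half_memKF z : z \in L -> (z \in K) = false.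
Proof.
move=> zL; apply/negbTE; apply: contra half_notin_a => /(subsetP sK_a2).
rewrite mem_lcoset => /(subsetP half_sub_cycle2) azL.
by rewrite -groupV -(mulgK z a^-1) groupM ?groupV.
Qed.

Lemma half_conj_lcoset : (b *: H) :^ b = b *: H.
Proof. by rewrite conjsMg conjg_set1 conjgE mulKg dihedral_conjs_cycle ?sH_a. Qed.

Lemma dihedral_switch_iso : cay_iso G S T.
Proof.
have notL_bH z : z \notin L -> (z \in b *: H) = false.
  by move=> zL; apply: contraNF zL => /(subsetP half_lcoset_sub).
apply: (switch_cay_iso half_subG half_index half_memb).
- move=> z zL; rewrite !inE (mem_lcoset K) !half_memKF //.
  by rewrite groupMl ?groupV ?half_memb.
- move=> z zL; rewrite !inE (mem_lcoset K) half_memKF ?orbF; last first.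
    by rewrite groupMl ?groupV ?half_memb // groupJ ?groupV ?half_memb.
  by rewrite -mem_conjg half_conj_lcoset half_memKF ?orbF.
- move=> z /setDP[_ zL]; rewrite !inE (notL_bH z) // !mem_lcoset mulKg.
  by rewrite (contraNF (subsetP (subset_trans sH_a2 half_sub_cycle2) _)).
- move=> z /setDP[_ zL]; rewrite !inE notL_bH; last first.
    by rewrite groupMr ?groupV ?half_memb.
  rewrite notL_bH // mem_lcoset {2}dihedral_invb -conjgE.
  by rewrite -{1}(dihedral_conjs_cycle sK_a KV) memJ_conjg.
Qed.

Lemma cay_conn_S : S \subset G /\ 1 \notin S.
Proof.
split; last by rewrite inE half_memKF // orbF dihedral_lcoset_notin ?sH_a.
rewrite subUset (subset_trans half_lcoset_sub half_subG) (subset_trans sK_a) //.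
by rewrite cycle_subG dihedral_mema.
Qed.

Lemma cay_conn_T : T \subset G /\ 1 \notin T.
Proof.
have saG : <[a]> \subset G by rewrite cycle_subG dihedral_mema.
split; last by rewrite inE negb_or !dihedral_lcoset_notin ?sH_a ?sK_a.
rewrite -(lcoset_id dihedral_memb) subUset !lcosetS.
by rewrite !(subset_trans _ saG) ?sH_a ?sK_a.
Qed.

Lemma Aut_S_T_K0 alpha :
  (2 < n)%N -> alpha \in Aut G -> alpha @: S = T -> K = set0.
Proof.
move=> n_gt2 AutGalpha alphaST; apply/setP=> k; rewrite inE; apply/negbTE/negP=> kK.
have alpha_ka : alpha k \in <[a]> by apply: dihedral_Aut_cycle; rewrite ?(subsetP sK_a).
have : alpha k \in T by rewrite -alphaST imset_f // inE kK orbT.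
by apply/negP; rewrite inE negb_or !dihedral_lcoset_notin ?sH_a ?sK_a.
Qed.

End Dihedral.

Theorem lemma3p2 (gT : finGroupType) (G : {group gT}) (n : nat) (a b : gT)
  (H K : {set gT}) :
  (4 <= n)%N -> ~~ odd n -> dihedral_pres G n a b ->
  H \subset <[a ^+ 2]> -> K \subset a *: <[a ^+ 2]> ->
  H^-1 = H -> K^-1 = K ->
  cay_iso G (b *: H :|: K) (b *: H :|: b *: K) /\
  (DCI_property G #|b *: H :|: K| -> K = set0).
Proof.
move=> n_ge4 n_even DG sH_a2 sK_a2 HV KV.
have iso := dihedral_switch_iso DG n_even sH_a2 sK_a2 HV KV.
split=> // DCI.
have [sSG S1] := cay_conn_S DG n_even sH_a2 sK_a2.
have [sTG T1] := cay_conn_T DG sH_a2 sK_a2.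
have [alpha AutGalpha alphaST] := DCI _ sSG S1 erefl _ sTG T1 iso.
have n_gt2 : (2 < n)%N by lia.
exact: (Aut_S_T_K0 DG sH_a2 sK_a2 n_gt2 AutGalpha alphaST).
Qed.
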